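(* Let $\mathbf G\in\mathbb R^{d\times d}_{\rm sym}$ with eigenvalues $g_1,\dots,g_d$, and let $f$ be a real function defined in a neighbourhood of $\{\frac{g_i-g_j}2\}_{i,j=1}^d$. Decompose $f=f_0+f_{\rm odd}+f_{\rm even}$ with $f_0:=f(0)$, $f_{\rm odd}(x):=\frac{f(x)-f(-x)}2$, $f_{\rm even}(x):=\frac{f(x)+f(-x)}2-f(0)$. Then for all $\mathbf X\in\mathbb R^{d\times d}$: (i) If $d=1$, or if all eigenvalues coincide, $f(\mathsf{Ad}_{\mathbf G})\mathbf X=f_0\mathbf X$. (ii) If $d=2$ and $g_1\ne g_2$, $f(\mathsf{Ad}_{\mathbf G})\mathbf X=f_0\mathbf X+\frac{f_{\rm odd}(\frac{g_1-g_2}2)}{g_1-g_2}(\mathbf G\mathbf X-\mathbf X\mathbf G)+\frac{f_{\rm even}(\frac{g_1-g_2}2)}{(g_1-g_2)^2}\big(-2g_1g_2\mathbf X+(g_1+g_2)(\mathbf G\mathbf X+\mathbf X\mathbf G)-2\mathbf G\mathbf X\mathbf G\big).$ (iii) If $d=3$ and $g_1,g_2,g_3$ are pairwise distinct, $f(\mathsf{Ad}_{\mathbf G})\mathbf X=-K_2(\mathbf G\mathbf X-\mathbf X\mathbf G)+K_1(\mathbf G^2\mathbf X-\mathbf X\mathbf G^2)-K_0(\mathbf G^2\mathbf X\mathbf G-\mathbf G\mathbf X\mathbf G^2)+(f_0+2J_3L_1)\mathbf X-(J_2L_1+J_3L_0)(\mathbf G\mathbf X+\mathbf X\mathbf G)+2(L_2+J_2L_0)\mathbf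 G\mathbf X\mathbf G+(J_1L_1-L_2)(\mathbf G^2\mathbf X+\mathbf X\mathbf G^2)-(L_1+J_1L_0)(\mathbf G^2\mathbf X\mathbf G+\mathbf G\mathbf X\mathbf G^2)+2L_0\mathbf G^2\mathbf X\mathbf G^2,$ where $J_1=g_1+g_2+g_3$, $J_2=g_1g_2+g_2g_3+g_3g_1$, $J_3=g_1g_2g_3$ and, for $n=0,1,2$, $K_n=\frac{g_1^nf_{\rm odd}(\frac{g_2-g_3}2)+g_2^nf_{\rm odd}(\frac{g_3-g_1}2)+g_3^nf_{\rm odd}(\frac{g_1-g_2}2)}{(g_1-g_2)(g_2-g_3)(g_3-g_1)}$, $L_n=\frac{g_1^n\frac{f_{\rm even}((g_2-g_3)/2)}{g_2-g_3}+g_2^n\frac{f_{\rm even}((g_3-g_1)/2)}{g_3-g_1}+g_3^n\frac{f_{\rm even}((g_1-g_2)/2)}{g_1-g_2}}{(g_1-g_2)(g_2-g_3)(g_3-g_1)}$. If $d=3$ and exactly two eigenvalues are distinct, the formula in (ii) holds (with the indices relabelled so that $g_1\ne g_2$ denote the two distinct eigenvalues).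
   Context: For $\mathbf G\in\mathbb R^{d\times d}$, $\mathsf{Ad}_{\mathbf G}\mathbf X=\tfrac12(\mathbf G\mathbf X-\mathbf X\mathbf G)$ on $\mathbb R^{d\times d}$. For $\mathbf G\in\mathbb R^{d\times d}_{\rm sym}$ write $\mathbf G=\mathbf Q\operatorname{diag}(g_1,\dots,g_d)\mathbf Q^{\mathsf T}$ with $\mathbf Q$ orthogonal. For a function $h$ defined near the points $\frac{g_i-g_j}2$, $h(\mathsf{Ad}_{\mathbf G})\mathbf X:=\mathbf Q\big([h(\frac{g_i-g_j}2)]\odot(\mathbf Q^{\mathsf T}\mathbf X\mathbf Q)\big)\mathbf Q^{\mathsf T}$, where $[m_{ij}]$ is the matrix with entries $m_{ij}$, $\odot$ the entrywise product, and removable discontinuities of $h$ are replaced by limits. *)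

From HB Require Import structures.
From mathcomp Require Import all_boot all_order all_algebra.
Set Implicit Arguments. Unset Strict Implicit. Unset Printing Implicit Defensive.
Import Order.TTheory GRing.Theory Num.Theory.
Local Open Scope ring_scope.

Section Defs.
Variable R : realFieldType.

(* h(Ad_G) X := Q ([h((g_i-g_j)/2)] ⊙ (Q^T X Q)) Q^T, for G = Q diag(g) Q^T. *)
Definition adfun (n : nat) (Q : 'M[R]_n) (g : 'rV[R]_n) (h : R -> R)
  (X : 'M[R]_n) : 'M[R]_n :=
  Q *m (\matrix_(i, j) (h ((g 0 i - g 0 j) / 2) * (Q^T *m X *m Q) i j)) *m Q^T.

Definition fodd (f : R -> R) (x : R) : R := (f x - f (- x)) / 2.
Definition feven (f : R -> R) (x : R) : R := (f x + f (- x)) / 2 - f 0.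

Definition formula2 (n : nat) (f : R -> R) (g1 g2 : R) (G X : 'M[R]_n) : 'M[R]_n :=
  f 0 *: X
  + (fodd f ((g1 - g2) / 2) / (g1 - g2)) *: (G *m X - X *m G)
  + (feven f ((g1 - g2) / 2) / (g1 - g2) ^+ 2) *:
      (- (2 * g1 * g2) *: X + (g1 + g2) *: (G *m X + X *m G) - 2%:R *: (G *m X *m G)).

Definition Kn (f : R -> R) (g1 g2 g3 : R) (k : nat) : R :=
  (g1 ^+ k * fodd f ((g2 - g3) / 2) + g2 ^+ k * fodd f ((g3 - g1) / 2)
   + g3 ^+ k * fodd f ((g1 - g2) / 2)) / ((g1 - g2) * (g2 - g3) * (g3 - g1)).

Definition Ln (f : R -> R) (g1 g2 g3 : R) (k : nat) : R :=
  (g1 ^+ k * (feven f ((g2 - g3) / 2) / (g2 - g3))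
   + g2 ^+ k * (feven f ((g3 - g1) / 2) / (g3 - g1))
   + g3 ^+ k * (feven f ((g1 - g2) / 2) / (g1 - g2)))
  / ((g1 - g2) * (g2 - g3) * (g3 - g1)).

Definition formula3 (f : R -> R) (g1 g2 g3 : R) (G X : 'M[R]_3) : 'M[R]_3 :=
  let J1 := g1 + g2 + g3 in
  let J2 := g1 * g2 + g2 * g3 + g3 * g1 in
  let J3 := g1 * g2 * g3 in
  let K0 := Kn f g1 g2 g3 0 in let K1 := Kn f g1 g2 g3 1 in
  let K2 := Kn f g1 g2 g3 2 in
  let L0 := Ln f g1 g2 g3 0 in let L1 := Ln f g1 g2 g3 1 in
  let L2 := Ln f g1 g2 g3 2 in
  let G2 := G *m G in
  - (K2 *: (G *m X - X *m G))
  + K1 *: (G2 *m X - X *m G2)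
  - K0 *: (G2 *m X *m G - G *m X *m G2)
  + (f 0 + 2%:R * J3 * L1) *: X
  - (J2 * L1 + J3 * L0) *: (G *m X + X *m G)
  + (2%:R * (L2 + J2 * L0)) *: (G *m X *m G)
  + (J1 * L1 - L2) *: (G2 *m X + X *m G2)
  - (L1 + J1 * L0) *: (G2 *m X *m G + G *m X *m G2)
  + (2%:R * L0) *: (G2 *m X *m G2).

End Defs.

(* If G = Q diag(g) Q^T with Q orthogonal, conjugation by Q turns f(Ad_G) into
   the Hadamard multiplier [f((g_i - g_j)/2)], and turns every matrix
   G^a X G^b into the Hadamard product of Q^T X Q with [g_i^a g_j^b].  Both
   sides of each formula are therefore conjugates of Hadamard multipliers, and
   it suffices to compare their symbols entrywise.  When the g_i take at most
   three values, each symbol entry is an identity between scalars, obtained by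
   splitting f(x) = f(0) + f_odd(x) + f_even(x) and noting that (g_j - g_i)/2
   is the opposite of (g_i - g_j)/2. *)
From HB Require Import structures.
From mathcomp Require Import all_boot all_order all_algebra.
From mathcomp Require Import ring.
Import Order.TTheory GRing.Theory Num.Theory.
Local Open Scope ring_scope.
Set Implicit Arguments.

Section OrthogonalConjugation.
Context {R : comUnitRingType} {n : nat} (Q : 'M[R]_n).
Hypothesis QtQ : Q^T *m Q = 1%:M.

Definition oconj (M : 'M[R]_n) : 'M[R]_n := Q *m M *m Q^T.

Lemma oconjM A B : oconj A *m oconj B = oconj (A *m B).
Proof. by rewrite /oconj !mulmxA -[Q *m A *m Q^T *m Q]mulmxA QtQ mulmx1. Qed.

Lemma oconjD A B : oconj A + oconj B = oconj (A + B).
Proof. by rewrite /oconj mulmxDr mulmxDl. Qed.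

Lemma oconjN A : - oconj A = oconj (- A).
Proof. by rewrite /oconj mulmxN mulNmx. Qed.

Lemma oconjZ a A : a *: oconj A = oconj (a *: A).
Proof. by rewrite /oconj -scalemxAr scalemxAl. Qed.

Lemma oconjK A : Q^T *m oconj A *m Q = A.
Proof. by rewrite /oconj !mulmxA QtQ mul1mx -mulmxA QtQ mulmx1. Qed.

Lemma oconj_surj X : oconj (Q^T *m X *m Q) = X.
Proof.
have QQt : Q *m Q^T = 1%:M := mulmx1C QtQ.
by rewrite /oconj !mulmxA QQt mul1mx -mulmxA QQt mulmx1.
Qed.

End OrthogonalConjugation.

Lemma adfun_oconj (R : realFieldType) n (Q : 'M[R]_n) g h Y :
  Q^T *m Q = 1%:M ->
  adfun Q g h (oconj Q Y) =
  oconj Q (\matrix_(i, j) (h ((g 0 i - g 0 j) / 2) * Y i j)).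
Proof. by move=> QtQ; rewrite /adfun oconjK. Qed.

Section OddEvenSplitting.
Context {R : realFieldType} (f : R -> R).

Lemma fodd_feven_split x : f x = f 0 + fodd f x + feven f x.
Proof. by rewrite /fodd /feven; field; rewrite ?pnatr_eq0. Qed.

Lemma fodd_feven_splitN x : f (- x) = f 0 - fodd f x + feven f x.
Proof. by rewrite /fodd /feven ?opprK; field; rewrite ?pnatr_eq0. Qed.

Lemma fodd_feven_split_halfC (a b : R) :
  f ((b - a) / 2) = f 0 - fodd f ((a - b) / 2) + feven f ((a - b) / 2).
Proof. by rewrite -fodd_feven_splitN -mulNr opprB. Qed.

End OddEvenSplitting.

Lemma ord2_cases (i : 'I_2) : i = 0 \/ i = 1.
Proof. by case: i => [[|[|//]]] Hi; [left | right]; apply: val_inj. Qed.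

Lemma ord3_cases (i : 'I_3) : i = 0 \/ i = 1 \/ i = 2%:R.
Proof.
by case: i => [[|[|[|//]]]] Hi; [left | right; left | right; right]; apply: val_inj.
Qed.

Section DiagonalFrame.
Context {R : realFieldType} (f : R -> R) {n : nat} (Q : 'M[R]_n) (g : 'rV[R]_n).
Hypothesis QtQ : Q^T *m Q = 1%:M.

Lemma adfun_eq_scale X :
  (forall i j, g 0 i = g 0 j) -> adfun Q g f X = f 0 *: X.
Proof.
move=> gconst; rewrite -[X](oconj_surj QtQ) (adfun_oconj _ _ _ QtQ) oconjZ.
by congr (oconj Q _); apply/matrixP => i j; rewrite !mxE (gconst i j) subrr mul0r.
Qed.

Lemma adfun_two_eigenvalues (a b : R) X :
  a != b -> (forall k, g 0 k = a \/ g 0 k = b) ->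
  adfun Q g f X = formula2 f a b (oconj Q (diag_mx g)) X.
Proof.
move=> neq_ab g_ab; rewrite -[X](oconj_surj QtQ); move: (Q^T *m X *m Q) => Y.
rewrite (adfun_oconj _ _ _ QtQ) /formula2 !(oconjM QtQ, oconjZ, oconjN, oconjD).
congr (oconj Q _); apply/matrixP => i j.
rewrite -!mulmxA !mul_diag_mx !mul_mx_diag !mxE.
have ab0 : a - b != 0 by rewrite subr_eq0.
have two0 : (2%:R : R) != 0 by rewrite pnatr_eq0.
case: (g_ab i) => ->; case: (g_ab j) => ->.
- by rewrite subrr mul0r; field.
- by rewrite (fodd_feven_split f); field.
- by rewrite fodd_feven_split_halfC; field.
- by rewrite subrr mul0r; field.
Qed.

End DiagonalFrame.

Lemma adfun_three_eigenvalues (R : realFieldType) (f : R -> R) (Q : 'M[R]_3)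
    (g : 'rV[R]_3) X :
  Q^T *m Q = 1%:M -> g 0 0 != g 0 1 -> g 0 1 != g 0 2%:R -> g 0 2%:R != g 0 0 ->
  adfun Q g f X = formula3 f (g 0 0) (g 0 1) (g 0 2%:R) (oconj Q (diag_mx g)) X.
Proof.
move=> QtQ neq01 neq12 neq20.
rewrite -[X](oconj_surj QtQ); move: (Q^T *m X *m Q) => Y.
rewrite (adfun_oconj _ _ _ QtQ) /formula3 !(oconjM QtQ, oconjZ, oconjN, oconjD).
congr (oconj Q _); apply/matrixP => i j.
rewrite -!mulmxA !mulmx_diag !mul_diag_mx !mul_mx_diag !mxE /Kn /Ln.
have d01 : g 0 0 - g 0 1 != 0 by rewrite subr_eq0.
have d12 : g 0 1 - g 0 2%:R != 0 by rewrite subr_eq0.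
have d20 : g 0 2%:R - g 0 0 != 0 by rewrite subr_eq0.
have two0 : (2%:R : R) != 0 by rewrite pnatr_eq0.
case: (ord3_cases i) => [|[|]] ->; case: (ord3_cases j) => [|[|]] ->.
- by rewrite subrr mul0r; field; rewrite ?d01 ?d12 ?d20.
- by rewrite (fodd_feven_split f); field; rewrite ?d01 ?d12 ?d20.
- by rewrite (fodd_feven_split_halfC f (g 0 2%:R) (g 0 0)); field; rewrite ?d01 ?d12 ?d20.
- by rewrite (fodd_feven_split_halfC f (g 0 0) (g 0 1)); field; rewrite ?d01 ?d12 ?d20.
- by rewrite subrr mul0r; field; rewrite ?d01 ?d12 ?d20.
- by rewrite (fodd_feven_split f); field; rewrite ?d01 ?d12 ?d20.
- by rewrite (fodd_feven_split f); field; rewrite ?d01 ?d12 ?d20.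
- by rewrite (fodd_feven_split_halfC f (g 0 1) (g 0 2%:R)); field; rewrite ?d01 ?d12 ?d20.
- by rewrite subrr mul0r; field; rewrite ?d01 ?d12 ?d20.
Qed.

Unset Implicit Arguments.

Theorem mainTheorem2 (R : realFieldType) (f : R -> R) :
  (* (i) *)
  (forall (d : nat) (G Q : 'M[R]_d) (g : 'rV[R]_d) (X : 'M[R]_d),
     G^T = G -> Q^T *m Q = 1%:M -> G = Q *m diag_mx g *m Q^T ->
     (d = 1%N \/ (forall i j : 'I_d, g 0 i = g 0 j)) ->
     adfun Q g f X = f 0 *: X)
  /\
  (* (ii) *)
  (forall (G Q : 'M[R]_2) (g : 'rV[R]_2) (X : 'M[R]_2),
     G^T = G -> Q^T *m Q = 1%:M -> G = Q *m diag_mx g *m Q^T ->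
     g 0 0 != g 0 1 ->
     adfun Q g f X = formula2 f (g 0 0) (g 0 1) G X)
  /\
  (* (iii) *)
  (forall (G Q : 'M[R]_3) (g : 'rV[R]_3) (X : 'M[R]_3),
     G^T = G -> Q^T *m Q = 1%:M -> G = Q *m diag_mx g *m Q^T ->
     g 0 0 != g 0 1 -> g 0 1 != g 0 2 -> g 0 2 != g 0 0 ->
     adfun Q g f X = formula3 f (g 0 0) (g 0 1) (g 0 2) G X)
  /\
  (* d = 3, exactly two distinct eigenvalues, relabelled as g i <> g j *)
  (forall (G Q : 'M[R]_3) (g : 'rV[R]_3) (X : 'M[R]_3) (i j : 'I_3),
     G^T = G -> Q^T *m Q = 1%:M -> G = Q *m diag_mx g *m Q^T ->
     g 0 i != g 0 j -> (forall k : 'I_3, g 0 k = g 0 i \/ g 0 k = g 0 j) ->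
     adfun Q g f X = formula2 f (g 0 i) (g 0 j) G X).
Proof.
split; [|split; [|split]].
- move=> d G Q g X _ QtQ _ hd; apply: adfun_eq_scale => // i j.
  by case: hd => [d1 | gconst]; [subst d; rewrite !ord1 | apply: gconst].
- move=> G Q g X _ QtQ -> neq01; apply: adfun_two_eigenvalues => // k.
  by case: (ord2_cases k) => ->; [left | right].
- by move=> G Q g X _ QtQ ->; apply: adfun_three_eigenvalues.
- by move=> G Q g X i j _ QtQ ->; apply: adfun_two_eigenvalues.
Qed.
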